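(* Let $m,p\ge1$, let $\mathbf{X}=(X_1,\dots,X_p)$ take values in $\mathbb{X}^p$ with $|\mathbb{X}|=m$, and $Y$ in $\{0,1\}$, so that joint distributions of $(\mathbf{X},Y)$ are identified with probability vectors $\mathbf{p}\in\mathbb{R}_+^{2m^p}$, $\mathbf{1}^T\mathbf{p}=1$. Let $\tilde{\mathbf{p}}$ be the uniform probability vector. Then there exists $\epsilon>0$ such that for every probability vector $\mathbf{p}$ with $\|\mathbf{p}-\tilde{\mathbf{p}}\|_1<\epsilon$, the class $\mathcal{C}(\mathbf{p})$ contains a distribution $\hat{\mathbb{P}}$ for which there exist functions $f_i:\mathbb{X}\to\mathbb{R}$, $i=1,\dots,p$, with $\mathbb{E}_{\hat{\mathbb{P}}}[Y\mid\mathbf{X}]=\sum_{i=1}^p f_i(X_i)$.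
   Context: For a probability vector $\mathbf{p}$, $\mathcal{C}(\mathbf{p})$ denotes the class of all joint distributions of $(\mathbf{X},Y)$ having the same pairwise marginals as $\mathbf{p}$, i.e. the same values of $\mathbb{P}(X_i=x_i,X_j=x_j)$ and $\mathbb{P}(X_i=x_i,Y=y)$ for all $i,j\in\{1,\dots,p\}$, $x_i,x_j\in\mathbb{X}$, $y\in\{0,1\}$. *)

From HB Require Import structures.
From mathcomp Require Import all_boot all_order all_algebra.
From mathcomp Require Import reals.
Set Implicit Arguments. Unset Strict Implicit. Unset Printing Implicit Defensive.
Import Order.TTheory GRing.Theory Num.Theory.
Local Open Scope ring_scope.

(* Outcomes of (X, Y): X = (X_1..X_p) in 'I_m ^ p, Y in bool (false = 0, true = 1). *)
Definition outcome (m p : nat) : finType := ({ffun 'I_p -> 'I_m} * bool)%type.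

Section Defs.
Variables (R : realType) (m p : nat).
Local Notation T := (outcome m p).

Definition is_prob (P : {ffun T -> R}) : Prop :=
  (forall t, 0 <= P t) /\ \sum_t P t = 1.

Definition unif_prob : {ffun T -> R} := [ffun _ => (#|T|%:R)^-1].

Definition l1dist (P Q : {ffun T -> R}) : R := \sum_t `|P t - Q t|.

Definition margXX (P : {ffun T -> R}) (i j : 'I_p) (a b : 'I_m) : R :=
  \sum_(t : T | (t.1 i == a) && (t.1 j == b)) P t.

Definition margXY (P : {ffun T -> R}) (i : 'I_p) (a : 'I_m) (y : bool) : R :=
  \sum_(t : T | (t.1 i == a) && (t.2 == y)) P t.

Definition same_pairwise (P Q : {ffun T -> R}) : Prop :=
  (forall i j a b, margXX Q i j a b = margXX P i j a b) /\
  (forall i a y, margXY Q i a y = margXY P i a y).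

Definition classC (P Q : {ffun T -> R}) : Prop := is_prob Q /\ same_pairwise P Q.

Definition margX (P : {ffun T -> R}) (x : {ffun 'I_p -> 'I_m}) : R :=
  P (x, false) + P (x, true).

(* E_P[Y | X] = sum_i f_i(X_i) (P-almost surely, i.e. on every x with P(X=x) > 0);
   E_P[Y | X = x] = P(X = x, Y = 1) / P(X = x). *)
Definition additive_condexp (P : {ffun T -> R}) : Prop :=
  exists f : 'I_p -> 'I_m -> R,
    forall x : {ffun 'I_p -> 'I_m}, 0 < margX P x ->
      P (x, true) / margX P x = \sum_(i < p) f i (x i).
End Defs.

(* Keep the law of X and replace P(Y = 1 | X) by its best additive approximation g in
   L2(P_X).  The normal equations of this least-squares problem are exactly the (X_i, Y)
   marginal constraints, so the new law lies in C(P) and has additive conditional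
   expectation g; it is a probability vector as soon as 0 <= g <= 1.  The constant 1/2
   is additive, so projecting cannot move g further from 1/2 (in L2(P_X)) than
   P(Y = 1 | X) is; near the uniform law both are close to 1/2. *)
From HB Require Import structures.
From mathcomp Require Import all_boot all_order all_algebra.
From mathcomp Require Import reals ring lra.
Set Implicit Arguments. Unset Strict Implicit. Unset Printing Implicit Defensive.
Import Order.TTheory GRing.Theory Num.Theory.
Local Open Scope ring_scope.

Section WeightedLeastSquares.
Variable R : realFieldType.

Lemma weighted_sqr_sum_eq0 (I : finType) (d s : I -> R) :
  (forall i, 0 < d i) -> \sum_i d i * s i ^+ 2 = 0 -> forall i, s i = 0.
Proof.
move=> d_gt0 sum0 i; apply/eqP.
have /eqP := @psumr_eq0P _ _ _ _ (fun j _ => mulr_ge0 (ltW (d_gt0 j)) (sqr_ge0 (s j))) sum0 i isT.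
by rewrite mulf_eq0 gt_eqF // sqrf_eq0.
Qed.

(* A vector [c] killing [B D B^T] gives [(B^T c)^T D (B^T c) = 0], hence [B^T c = 0]. *)
Lemma trmx_sub_gram n k (B : 'M[R]_(n, k)) (d : 'rV[R]_k) :
  (forall j, 0 < d 0 j) -> (B^T <= B *m diag_mx d *m B^T)%MS.
Proof.
move=> d_gt0; set G := B *m _ *m _; set S := B^T *m cokermx G.
have quad0 : S^T *m diag_mx d *m S = 0.
  rewrite /S trmx_mul trmxK -!mulmxA.
  by have := mulmx_coker G; rewrite /G -!mulmxA => ->; rewrite mulmx0.
rewrite submxE -/S; apply/eqP/matrixP => j i; rewrite [RHS]mxE; move: j.
apply: (@weighted_sqr_sum_eq0 _ (fun j => d 0 j) (fun j => S j i)) => //.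
transitivity ((S^T *m diag_mx d *m S) i i); last by rewrite quad0 mxE.
rewrite mxE.
by apply: eq_bigr => j _; rewrite mul_mx_diag !mxE; ring.
Qed.

Lemma sum_enum_val (I : finType) (F : I -> R) :
  \sum_(x : I) F x = \sum_(j < #|I|) F (enum_val j).
Proof. by rewrite -(big_enum_val (A := I)); apply: eq_bigl. Qed.

Lemma normal_eq_solvable (K X : finType) (phi : K -> X -> R) (w q : X -> R) :
  (forall x, 0 < w x) -> exists f : K -> R, forall k,
  \sum_x phi k x * (w x * \sum_l f l * phi l x) = \sum_x phi k x * q x.
Proof.
move=> w_gt0.
pose B : 'M[R]_(#|K|, #|X|) := \matrix_(i, j) phi (enum_val i) (enum_val j).
pose d : 'rV[R]_#|X| := \row_j w (enum_val j).
pose qv : 'rV[R]_#|X| := \row_j q (enum_val j).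
have /submxP [F qF] : (qv *m B^T <= B *m diag_mx d *m B^T)%MS.
  have d_gt0 j : 0 < d 0 j by rewrite mxE.
  exact: submx_trans (submxMl qv B^T) (trmx_sub_gram B d_gt0).
exists (fun l => F 0 (enum_rank l)) => k.
have /matrixP /(_ 0 (enum_rank k)) := qF; rewrite [LHS]mxE [RHS]mxE => qFk.
transitivity (\sum_j F 0 j * (B *m diag_mx d *m B^T) j (enum_rank k)); last first.
  by rewrite -qFk [RHS]sum_enum_val; apply: eq_bigr => j _; rewrite !mxE enum_rankK mulrC.
rewrite [LHS]sum_enum_val.
under eq_bigr => i _ do rewrite sum_enum_val !mulr_sumr.
rewrite exchange_big /=; apply: eq_bigr => j _.
rewrite mxE mulr_sumr; apply: eq_bigr => i _.
by rewrite mul_mx_diag !mxE enum_rankK enum_valK; ring.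
Qed.

(* Expand [0 <= \sum_i w i * (e i - r i / w i) ^+ 2]; by orthogonality the cross term is
   twice the left-hand side. *)
Lemma weighted_sqr_le (I : finType) (w e r : I -> R) :
  (forall i, 0 < w i) -> \sum_i e i * (w i * e i - r i) = 0 ->
  \sum_i w i * e i ^+ 2 <= \sum_i r i ^+ 2 / w i.
Proof.
move=> w_gt0 orth; rewrite -subr_ge0.
have expand i : w i * (e i - r i / w i) ^+ 2 =
    r i ^+ 2 / w i - w i * e i ^+ 2 + 2 * (e i * (w i * e i - r i)).
  by field; exact: lt0r_neq0.
have : 0 <= \sum_i w i * (e i - r i / w i) ^+ 2.
  by apply: sumr_ge0 => i _; exact: mulr_ge0 (ltW (w_gt0 i)) (sqr_ge0 _).
by under eq_bigr do rewrite expand; rewrite big_split /= -mulr_sumr orth mulr0 addr0 sumrB.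
Qed.

Lemma sqr_le_quarter (I : finType) (w e r : I -> R) (u eps : R) :
  0 < u -> (forall i, u <= w i) -> (forall i, r i ^+ 2 <= eps ^+ 2) ->
  4 * #|I|%:R * eps ^+ 2 <= u ^+ 2 ->
  \sum_i w i * e i ^+ 2 <= \sum_i r i ^+ 2 / w i -> forall i, e i ^+ 2 <= 4^-1.
Proof.
move=> u_gt0 w_ge r_le N_eps dev i.
have w_gt0 j : 0 < w j := lt_le_trans u_gt0 (w_ge j).
have term_le j : r j ^+ 2 / w j <= eps ^+ 2 / u.
  apply: ler_pM; rewrite ?sqr_ge0 ?r_le ?invr_ge0 //; first exact: ltW.
  by rewrite lef_pV2 ?posrE.
have sum_le : \sum_j r j ^+ 2 / w j <= #|I|%:R * eps ^+ 2 / u.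
  by rewrite -mulrA mulr_natl -sumr_const; apply: ler_sum => j _.
have bound : #|I|%:R * eps ^+ 2 / u <= u / 4.
  by rewrite ler_pdivrMr // mulrAC ler_pdivlMr //; lra.
have single : w i * e i ^+ 2 <= \sum_j w j * e j ^+ 2.
  rewrite (bigD1 i) //= lerDl; apply: sumr_ge0 => j _.
  exact: mulr_ge0 (ltW (w_gt0 j)) (sqr_ge0 (e j)).
have := w_ge i; have := sqr_ge0 (e i); nra.
Qed.

Lemma sqr_dev_half_le (x : R) : (x - 2^-1) ^+ 2 <= 4^-1 -> 0 <= x <= 1.
Proof. by move=> dev; apply/andP; split; nra. Qed.

End WeightedLeastSquares.

Section PairwiseMarginals.
Variables (R : realType) (m p : nat).
Local Notation X := {ffun 'I_p -> 'I_m}.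
Local Notation T := (outcome m p).

Lemma sum_outcome (F : T -> R) (C : pred X) :
  \sum_(t : T | C t.1) F t = \sum_(x | C x) (F (x, false) + F (x, true)).
Proof.
transitivity (\sum_(x | C x) \sum_(b : bool) F (x, b)).
  by rewrite pair_big /=; apply: eq_big => [[x b]|[x b] _] //=; rewrite andbT.
by apply: eq_bigr => x _; rewrite big_bool addrC.
Qed.

Lemma sum_outcome_snd (F : T -> R) (C : pred X) (y : bool) :
  \sum_(t : T | C t.1 && (t.2 == y)) F t = \sum_(x | C x) F (x, y).
Proof.
transitivity (\sum_(x | C x) \sum_(b : bool | b == y) F (x, b)).
  by rewrite pair_big /=; apply: eq_big => [[x b]|[x b] _].
by apply: eq_bigr => x _; rewrite big_pred1_eq.
Qed.

Lemma sum_margX (P : {ffun T -> R}) : \sum_t P t = \sum_x margX P x.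
Proof. exact: (sum_outcome P xpredT). Qed.

Lemma margXX_margX (P : {ffun T -> R}) i j a b :
  margXX P i j a b = \sum_(x : X | (x i == a) && (x j == b)) margX P x.
Proof. exact: (sum_outcome P (fun x : X => (x i == a) && (x j == b))). Qed.

Lemma margXY_snd (P : {ffun T -> R}) i a y :
  margXY P i a y = \sum_(x : X | x i == a) P (x, y).
Proof. exact: (sum_outcome_snd P (fun x : X => x i == a)). Qed.

Definition fits_margXY (w q g : X -> R) : Prop :=
  forall i a, \sum_(x : X | x i == a) w x * g x = \sum_(x : X | x i == a) q x.

Definition reweight (w g : X -> R) : {ffun T -> R} :=
  [ffun t => w t.1 * (if t.2 then g t.1 else 1 - g t.1)].

Lemma margX_reweight (w g : X -> R) x : margX (reweight w g) x = w x.
Proof. by rewrite /margX !ffunE /=; ring. Qed.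

Lemma reweight_is_prob (P : {ffun T -> R}) (g : X -> R) :
  is_prob P -> (forall x, 0 <= g x <= 1) -> is_prob (reweight (margX P) g).
Proof.
move=> [P_ge0 P_sum1] g01; split.
  move=> [x b]; rewrite ffunE; have /andP [g_ge0 g_le1] := g01 x.
  apply: mulr_ge0; first by apply: addr_ge0.
  by case: b => //=; rewrite subr_ge0.
by rewrite sum_margX -P_sum1 sum_margX; apply: eq_bigr => x _; rewrite margX_reweight.
Qed.

Lemma reweight_same_pairwise (P : {ffun T -> R}) (g : X -> R) :
  fits_margXY (margX P) (fun x => P (x, true)) g -> same_pairwise P (reweight (margX P) g).
Proof.
move=> fit; split=> [i j a b | i a y].
  by rewrite !margXX_margX; apply: eq_bigr => x _; rewrite margX_reweight.
rewrite !margXY_snd; case: y; rewrite -?fit.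
  by apply: eq_bigr => x _; rewrite ffunE.
transitivity (\sum_(x : X | x i == a) margX P x - \sum_(x : X | x i == a) margX P x * g x).
  by rewrite -sumrB; apply: eq_bigr => x _; rewrite ffunE /=; ring.
by rewrite fit -sumrB; apply: eq_bigr => x _; rewrite /margX; ring.
Qed.

Definition additive_fun (f : 'I_p -> 'I_m -> R) (x : X) : R := \sum_(i < p) f i (x i).

Lemma reweight_additive_condexp (w : X -> R) f :
  additive_condexp (reweight w (additive_fun f)).
Proof.
exists f => x; rewrite margX_reweight => w_gt0.
by rewrite ffunE /= mulrC mulKf ?lt0r_neq0.
Qed.

Lemma sum_indicator_fiber (F : X -> R) i a :
  \sum_(x : X) (x i == a)%:R * F x = \sum_(x : X | x i == a) F x.
Proof. by rewrite [RHS]big_mkcond; apply: eq_bigr => x _; rewrite mulr_natl mulrb. Qed.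

Lemma additive_fun_indicator (f : 'I_p * 'I_m -> R) (x : X) :
  \sum_l f l * (x l.1 == l.2)%:R = additive_fun (fun i a => f (i, a)) x.
Proof.
transitivity (\sum_(i < p) \sum_(a < m) f (i, a) * (x i == a)%:R).
  by rewrite pair_bigA; apply: eq_bigr => -[i a].
apply: eq_bigr => i _.
rewrite (bigD1 (x i)) //= eqxx mulr1 big1 ?addr0 // => a.
by rewrite eq_sym => /negbTE ->; rewrite mulr0.
Qed.

Lemma additive_fit (w q : X -> R) : (forall x, 0 < w x) ->
  exists f, fits_margXY w q (additive_fun f).
Proof.
move=> w_gt0.
have [f normal] := normal_eq_solvable (fun (l : 'I_p * 'I_m) (x : X) => (x l.1 == l.2)%:R) q w_gt0.
exists (fun i a => f (i, a)) => i a; rewrite -!sum_indicator_fiber -(normal (i, a)).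
by apply: eq_bigr => x _; rewrite additive_fun_indicator.
Qed.

Lemma additive_orthogonal (w q g : X -> R) : fits_margXY w q g ->
  forall h, \sum_x additive_fun h x * (w x * g x - q x) = 0.
Proof.
move=> fit h; under eq_bigr do rewrite mulr_suml.
rewrite exchange_big; apply: big1 => i _.
rewrite (partition_big (fun x : X => x i) xpredT) //=; apply: big1 => a _.
transitivity (h i a * \sum_(x : X | x i == a) (w x * g x - q x)).
  by rewrite mulr_sumr; apply: eq_bigr => x /eqP ->.
by rewrite sumrB fit subrr mulr0.
Qed.

Lemma additive_fit_dev (w q : X -> R) f : (0 < p)%N -> (forall x, 0 < w x) ->
  fits_margXY w q (additive_fun f) ->
  \sum_x w x * (additive_fun f x - 2^-1) ^+ 2 <= \sum_x (q x - w x / 2) ^+ 2 / w x.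
Proof.
move=> p_gt0 w_gt0 fit; apply: weighted_sqr_le => //.
pose i0 := Ordinal p_gt0; pose h i a := f i a - (i == i0)%:R / 2.
have shift x : additive_fun h x = additive_fun f x - 2^-1.
  rewrite /additive_fun sumrB; congr (_ - _).
  rewrite (bigD1 i0) //= div1r big1 ?addr0 //.
  by move=> i /negbTE ->; rewrite mul0r.
rewrite -[RHS](additive_orthogonal fit h); apply: eq_bigr => x _; rewrite shift; ring.
Qed.

Lemma normB_le_l1dist (P Q : {ffun T -> R}) t : `|P t - Q t| <= l1dist P Q.
Proof.
rewrite /l1dist (bigD1 t) //= lerDl.
by apply: sumr_ge0 => s _; exact: normr_ge0.
Qed.

Lemma near_uniform_additive_repr (P : {ffun T -> R}) (u eps : R) : (0 < p)%N ->
  is_prob P -> 0 < u -> 2 * eps <= u -> 4 * #|X|%:R * eps ^+ 2 <= u ^+ 2 ->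
  (forall t, `|P t - u| < eps) -> exists Q, classC P Q /\ additive_condexp Q.
Proof.
move=> p_gt0 P_prob u_gt0 eps_le N_eps close.
pose r x := P (x, true) - margX P x / 2.
have w_ge x : u <= margX P x.
  move: (close (x, false)) (close (x, true)).
  by rewrite /margX !ltr_norml => /andP [? ?] /andP [? ?]; lra.
have r_le x : r x ^+ 2 <= eps ^+ 2.
  move: (close (x, false)) (close (x, true)).
  rewrite /r /margX !ltr_norml => /andP [? ?] /andP [? ?].
  have : 0 <= (eps - r x) * (eps + r x) by apply: mulr_ge0; rewrite /r /margX; lra.
  by rewrite /r /margX; lra.
have w_gt0 x : 0 < margX P x := lt_le_trans u_gt0 (w_ge x).
have [f fit] := additive_fit (fun x => P (x, true)) w_gt0.
have g_dev := @sqr_le_quarter _ _ (margX P) (fun x => additive_fun f x - 2^-1) r u eps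
  u_gt0 w_ge r_le N_eps (additive_fit_dev p_gt0 w_gt0 fit).
exists (reweight (margX P) (additive_fun f)); split; last exact: reweight_additive_condexp.
split; last exact: reweight_same_pairwise.
by apply: reweight_is_prob => // x; exact: sqr_dev_half_le (g_dev x).
Qed.

End PairwiseMarginals.

Theorem theorem5 (R : realType) (m p : nat) (hm : (1 <= m)%N) (hp : (1 <= p)%N) :
  exists eps : R, 0 < eps /\
    forall P : {ffun outcome m p -> R},
      is_prob P -> l1dist P (unif_prob R m p) < eps ->
      exists Q : {ffun outcome m p -> R}, classC P Q /\ additive_condexp Q.
Proof.
pose N := #|{ffun 'I_p -> 'I_m}|.
pose u : R := (#|outcome m p|%:R)^-1.
have N_ge1 : 1 <= N%:R :> R.
  by rewrite ler1n; apply/card_gt0P; exists [ffun => Ordinal hm].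
have u_gt0 : 0 < u.
  by rewrite invr_gt0 ltr0n; apply/card_gt0P; exists ([ffun => Ordinal hm], true).
pose eps := u / (2 * N%:R).
have eps_gt0 : 0 < eps by apply: divr_gt0; lra.
have eps_N : eps * (2 * N%:R) = u by rewrite divfK // lt0r_neq0 //; lra.
exists eps; split => // P P_prob close.
apply: (near_uniform_additive_repr (u := u) (eps := eps)) => //; rewrite -/N.
- have : 0 <= eps * (N%:R - 1) by apply: mulr_ge0; lra.
  rewrite -eps_N; lra.
- have : 0 <= eps ^+ 2 * N%:R * (N%:R - 1).
    by apply: mulr_ge0; [apply: mulr_ge0; [apply: sqr_ge0 | lra] | lra].
  rewrite -eps_N; lra.
- move=> t; apply: le_lt_trans close.
  by have := normB_le_l1dist P (unif_prob R m p) t; rewrite ffunE.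
Qed.
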